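(* Let $G$ be a graph with Hermitian adjacency matrix $A$ that has universal perfect state transfer, and let $u$ be a vertex of $G$. Then for all vertices $v \neq u$ we have $t_{u,v} < t_{u,u}$.
   Context: A (weighted) graph $G$ on $n$ vertices is given by its adjacency matrix $A$, an $n\times n$ complex matrix, here assumed Hermitian. The continuous-time quantum walk is $U(t)=\exp(-\mathtt{i} A t)$. For vertices $v,w$, let $T_{v,w}=\{t\in\mathbb{R}^{+} : |\langle w| e^{-\mathtt{i} A t}|v\rangle|=1\}$ be the set of (positive) times at which perfect state transfer occurs from $v$ to $w$. $G$ has universal perfect state transfer if $T_{v,w}\neq\emptyset$ for every pair of vertices $v,w$. In that case each $T_{v,w}$ is a discrete additive subgroup of $\mathbb{R}$ (intersected with the positive reals), so it has a smallest element, denoted $t_{v,w}=\min T_{v,w}$. *)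

From HB Require Import structures.
From mathcomp Require Import all_boot all_order all_algebra.
From mathcomp Require Import all_classical all_reals all_analysis.
From mathcomp Require Import complex.
Import numFieldNormedType.Exports.
Set Implicit Arguments. Unset Strict Implicit. Unset Printing Implicit Defensive.
Import Order.TTheory GRing.Theory Num.Theory.
Local Open Scope ring_scope.
Local Open Scope complex_scope.
Local Open Scope classical_set_scope.

Definition hermitian_mx (R : realType) (n : nat) (A : 'M[R[i]]_n) : Prop :=
  A = (map_mx (@conjc R) A)^T.

Definition exp_partial (R : realType) (n : nat) (B : 'M[R[i]]_n) (N : nat)
  : 'M[R[i]]_n :=
  \sum_(k < N) ((k`!)%:R)^-1 *: B ^+ k.

Definition is_expmx (R : realType) (n : nat) (B U : 'M[R[i]]_n) : Prop :=
  forall j k : 'I_n,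
    (fun N => complex.Re (exp_partial B N j k)) @ \oo --> complex.Re (U j k)
    /\ (fun N => complex.Im (exp_partial B N j k)) @ \oo --> complex.Im (U j k).

Definition walk_mx (R : realType) (n : nat) (A : 'M[R[i]]_n) (t : R) : 'M[R[i]]_n
  -> Prop := is_expmx (- ('i * t%:C) *: A).

Definition pst_times (R : realType) (n : nat) (A : 'M[R[i]]_n) (v w : 'I_n)
  : set R :=
  [set t | 0 < t /\ exists U, walk_mx A t U /\ `|U w v| = 1].

Definition universal_pst (R : realType) (n : nat) (A : 'M[R[i]]_n) : Prop :=
  forall v w : 'I_n, pst_times A v w !=set0.

Definition is_min_of (R : realType) (S : set R) (t : R) : Prop :=
  S t /\ forall s, S s -> t <= s.

(* The walk U(t) = exp(-i t A) is constructed as the limit of the partial sums of the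
   exponential series, all estimates going through the entrywise l1 norm. It is a
   one-parameter group, U(s + t) = U(s) U(t), it is unitary because A is Hermitian, and
   |U(h) - 1| <= (n + 1) (exp (|h| |A|) - 1) keeps U(h) close to the identity for small
   h >= 0. Hence the transfer times from u to v != u are bounded away from 0, and their
   infimum t_uv is attained because |U(t)_vu| = 1 is a closed condition. If t <= t_uv
   were a return time to u, the u-th column of the unitary U(t) would be e_u up to a
   phase, so U(t_uv) = U(t_uv - t) U(t) would make t_uv - t a transfer time from u to v
   below t_uv (or, when t = t_uv, force U(t_uv)_vu = 0). So every return time exceeds
   t_uv, and the least return time t_uu exists as well. *)

From mathcomp Require Import all_boot all_order all_algebra.
From mathcomp Require Import all_classical all_reals all_analysis.
From mathcomp Require Import complex.
From mathcomp Require Import ring lra zify.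
Import Order.TTheory GRing.Theory Num.Theory Normc.
Import numFieldNormedType.Exports.
Set Implicit Arguments. Unset Strict Implicit. Unset Printing Implicit Defensive.
Local Open Scope complex_scope.
Local Open Scope classical_set_scope.
Local Open Scope ring_scope.

Section ComplexModulus.
Variable R : rcfType.
Implicit Types (z w : R[i]) (x : R).

Lemma normc_ge0 z : 0 <= normc z.
Proof. by case: z => a b; rewrite /= sqrtr_ge0. Qed.

Lemma normcB z w : normc (z - w) = normc (w - z).
Proof. by rewrite -normcN opprB. Qed.

Lemma normc_conj z : normc z^* = normc z.
Proof. by case: z => a b; rewrite /= sqrrN. Qed.

Lemma normc_real x : normc x%:C = `|x|.
Proof. by rewrite /= expr0n addr0 sqrtr_sqr. Qed.

Lemma normc_i : normc 'i = 1 :> R.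
Proof. by rewrite /= expr0n expr1n add0r sqrtr1. Qed.

Lemma normc_invn k : normc (k%:R^-1 : R[i]) = k%:R^-1.
Proof. by rewrite normcV normcMn normc1. Qed.

Lemma normr_normc z : `|z| = (normc z)%:C.
Proof. by case: z => a b; rewrite normc_def. Qed.

Lemma normc_Re z : `|complex.Re z| <= normc z.
Proof. by case: z => a b; rewrite /= -sqrtr_sqr ler_wsqrtr // lerDl sqr_ge0. Qed.

Lemma normc_Im z : `|complex.Im z| <= normc z.
Proof. by case: z => a b; rewrite /= -sqrtr_sqr ler_wsqrtr // lerDr sqr_ge0. Qed.

Lemma normc_le_ReIm z : normc z <= `|complex.Re z| + `|complex.Im z|.
Proof.
rewrite {1}[z]complexE; apply: le_trans (le_normcD _ _) _.
by rewrite normcM normc_i mul1r !normc_real.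
Qed.

Lemma mulJc z : z^* * z = (normc z ^+ 2)%:C.
Proof.
case: z => a b; rewrite /= sqr_sqrtr ?addr_ge0 ?sqr_ge0 //; simpc.
by congr (_ +i* _); ring.
Qed.

Lemma ler_dist_normc z w : `|normc z - normc w| <= normc (z - w).
Proof.
have lez : normc z <= normc (z - w) + normc w by rewrite -{1}(subrK w z) le_normcD.
have lew : normc w <= normc (w - z) + normc z by rewrite -{1}(subrK z w) le_normcD.
rewrite normcB in lew; rewrite ler_norml; apply/andP; split; lra.
Qed.

Lemma normc_sum (I : Type) (r : seq I) (P : pred I) (F : I -> R[i]) :
  normc (\sum_(i <- r | P i) F i) <= \sum_(i <- r | P i) normc (F i).
Proof.
elim/big_rec2: _ => [|i y z _ le_yz]; first by rewrite normc0.
by apply: le_trans (le_normcD _ _) _; rewrite lerD2l.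
Qed.

End ComplexModulus.

Section EntrywiseNorm.
Variable R : rcfType.
Local Notation C := R[i].

Definition l1norm p q (M : 'M[C]_(p, q)) : R := \sum_i \sum_j normc (M i j).

Lemma sumr_ge_term (I : finType) (F : I -> R) i :
  (forall j, 0 <= F j) -> F i <= \sum_j F j.
Proof. by move=> F_ge0; rewrite (bigD1 i) //= lerDl sumr_ge0. Qed.

Variables p q : nat.
Implicit Types M N : 'M[C]_(p, q).

Lemma l1norm_ge0 M : 0 <= l1norm M.
Proof. by do 2!apply: sumr_ge0 => ? _; exact: normc_ge0. Qed.

Lemma normc_le_l1norm M i j : normc (M i j) <= l1norm M.
Proof.
have row_ge0 i' : 0 <= \sum_j normc (M i' j) by apply: sumr_ge0 => ? _; exact: normc_ge0.
apply: le_trans (sumr_ge_term (F := fun i' => \sum_j normc (M i' j)) i row_ge0).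
exact: (sumr_ge_term (F := fun j => normc (M i j))) (fun j => normc_ge0 _).
Qed.

Lemma l1norm_le0_eq0 M : l1norm M <= 0 -> M = 0.
Proof.
move=> M_le0; apply/matrixP => i j; rewrite mxE; apply: eq0_normc.
by apply/eqP; rewrite eq_le normc_ge0 andbT (le_trans (normc_le_l1norm M i j)).
Qed.

Lemma l1norm0 : l1norm (0 : 'M[C]_(p, q)) = 0.
Proof. by rewrite /l1norm big1 // => i _; rewrite big1 // => j _; rewrite mxE normc0. Qed.

Lemma l1normD M N : l1norm (M + N) <= l1norm M + l1norm N.
Proof.
rewrite /l1norm -big_split; apply: ler_sum => i _.
by rewrite -big_split; apply: ler_sum => j _; rewrite mxE le_normcD.
Qed.

Lemma l1normN M : l1norm (- M) = l1norm M.
Proof. by apply: eq_bigr => i _; apply: eq_bigr => j _; rewrite mxE normcN. Qed.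

Lemma l1normB M N : l1norm (M - N) = l1norm (N - M).
Proof. by rewrite -l1normN opprB. Qed.

Lemma l1normZ c M : l1norm (c *: M) = normc c * l1norm M.
Proof.
rewrite /l1norm mulr_sumr; apply: eq_bigr => i _; rewrite mulr_sumr.
by apply: eq_bigr => j _; rewrite mxE normcM.
Qed.

Lemma l1norm_sum (I : Type) (r : seq I) (P : pred I) (F : I -> 'M[C]_(p, q)) :
  l1norm (\sum_(i <- r | P i) F i) <= \sum_(i <- r | P i) l1norm (F i).
Proof.
elim/big_rec2: _ => [|i y M _ le_yM]; first by rewrite l1norm0.
by apply: le_trans (l1normD _ _) _; rewrite lerD2l.
Qed.

Lemma l1norm_adj M : l1norm (map_mx (@conjc R) M)^T = l1norm M.
Proof.
rewrite /l1norm exchange_big; apply: eq_bigr => i _; apply: eq_bigr => j _.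
by rewrite !mxE normc_conj.
Qed.

Lemma l1normM r M (N : 'M[C]_(q, r)) : l1norm (M *m N) <= l1norm M * l1norm N.
Proof.
rewrite /l1norm mulr_suml; apply: ler_sum => i _.
have entry_le k : normc ((M *m N) i k) <= \sum_l normc (M i l) * normc (N l k).
  rewrite mxE; apply: le_trans (normc_sum _ _ _) _.
  by apply: ler_sum => l _; rewrite normcM.
apply: (@le_trans _ _ (\sum_k \sum_l normc (M i l) * normc (N l k))).
  by apply: ler_sum => k _; exact: entry_le.
rewrite exchange_big /= mulr_suml; apply: ler_sum => l _.
rewrite -mulr_sumr ler_wpM2l ?normc_ge0 //.
apply: (sumr_ge_term (F := fun l => \sum_k normc (N l k))) => l'.
by apply: sumr_ge0 => k _; exact: normc_ge0.
Qed.

End EntrywiseNorm.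

Lemma mulmx_sparse_col (K : pzSemiRingType) m p r (P : 'M[K]_(m, p)) (Q : 'M[K]_(p, r)) i k l :
  (forall j, j != k -> Q j l = 0) -> (P *m Q) i l = P i k * Q k l.
Proof.
move=> Q_col; rewrite mxE (bigD1 k) //= big1 ?addr0 // => j ne_jk.
by rewrite Q_col // mulr0.
Qed.

Section ExpSeries.
Variables (K : numFieldType) (V : algType K).
Implicit Types X Y : V.
Local Notation ifact k := ((k`!%:R : K)^-1).

Definition expsum X N := \sum_(k < N) ifact k *: X ^+ k.

Definition cauchy_term X Y i j := (ifact i * ifact j) *: (X ^+ i * Y ^+ j).

Lemma expsumS X N : expsum X N.+1 = expsum X N + ifact N *: X ^+ N.
Proof. by rewrite /expsum big_ord_recr. Qed.

Lemma expsum0 N : expsum 0 N.+1 = 1.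
Proof.
rewrite /expsum big_ord_recl big1 => [|k _]; last by rewrite expr0n scaler0.
by rewrite expr0 fact0 invr1 scale1r addr0.
Qed.

Lemma expsumM X Y N :
  expsum X N * expsum Y N = \sum_(i < N) \sum_(j < N) cauchy_term X Y i j.
Proof.
rewrite /expsum mulr_suml; apply: eq_bigr => i _; rewrite mulr_sumr.
by apply: eq_bigr => j _; rewrite -scalerAl -scalerAr scalerA.
Qed.

Lemma ifactM_bin N i : (i <= N)%N -> ifact i * ifact (N - i) = ifact N * 'C(N, i)%:R.
Proof.
move=> le_iN; rewrite -(bin_fact le_iN) !natrM.
have fact_neq0 k : (k`!%:R : K) != 0 by rewrite pnatr_eq0 -lt0n fact_gt0.
have bin_neq0 : ('C(N, i)%:R : K) != 0 by rewrite pnatr_eq0 -lt0n bin_gt0.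
by field; rewrite bin_neq0 !fact_neq0.
Qed.

Lemma cauchy_term_antidiag X Y N : GRing.comm X Y ->
  \sum_(i < N.+1) cauchy_term X Y i (N - i) = ifact N *: (X + Y) ^+ N.
Proof.
move=> cXY; rewrite addrC exprDn_comm; last exact/esym.
rewrite scaler_sumr; apply: eq_bigr => i _.
rewrite /cauchy_term -[_ *+ 'C(N, i)]scaler_nat scalerA -ifactM_bin; last by rewrite -ltnS.
by congr (_ *: _); apply/esym/commrX/esym/commrX/esym.
Qed.

Lemma expsumD X Y N : GRing.comm X Y ->
  expsum (X + Y) N =
  \sum_(i < N) \sum_(j < N) (if (i + j < N)%N then cauchy_term X Y i j else 0).
Proof.
move=> cXY; elim: N => [|N IHN]; first by rewrite /expsum !big_ord0.
rewrite expsumS IHN -cauchy_term_antidiag //.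
have split_lt (i j : 'I_N.+1) : (if (i + j < N.+1)%N then cauchy_term X Y i j else 0) =
    (if (i + j < N)%N then cauchy_term X Y i j else 0) +
    (if (i + j == N)%N then cauchy_term X Y i j else 0).
  by rewrite ltnS leq_eqVlt; case: eqP => [->|_] /=; rewrite ?ltnn ?add0r ?addr0.
rewrite (eq_bigr _ (fun i _ => eq_bigr _ (fun j _ => split_lt i j))).
rewrite (eq_bigr _ (fun i _ => big_split _ _ _ _ _)) big_split /=; congr (_ + _).
  rewrite [RHS]big_ord_recr /= [X in _ + X]big1 ?addr0; last first.
    by move=> j _; rewrite ltnNge leq_addr.
  by apply: eq_bigr => i _; rewrite big_ord_recr /= ltnNge leq_addl addr0.
apply: eq_bigr => i _.
have le_iN : (i <= N)%N by rewrite -ltnS.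
rewrite (bigD1 (inord (N - i))) //= big1 ?addr0.
  by rewrite inordK ?ltnS ?leq_subr // subnKC ?eqxx.
move=> j ne_j; case: eqP => // sum_ij; exfalso; move/eqP: ne_j; apply; apply/val_inj.
by rewrite /= inordK ?ltnS ?leq_subr //; lia.
Qed.

Lemma expsumM_sub X Y N : GRing.comm X Y ->
  expsum X N * expsum Y N - expsum (X + Y) N =
  \sum_(i < N) \sum_(j < N) (if (i + j < N)%N then 0 else cauchy_term X Y i j).
Proof.
move=> cXY; rewrite expsumM expsumD // -sumrB; apply: eq_bigr => i _.
by rewrite -sumrB; apply: eq_bigr => j _; case: ifP; rewrite ?subrr ?subr0.
Qed.

End ExpSeries.

Definition expsumR (R : numFieldType) (x : R) N : R := expsum (x : R^o) N.

Lemma expsumRS (R : numFieldType) (x : R) N :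
  expsumR x N.+1 = expsumR x N + (N`!%:R)^-1 * x ^+ N.
Proof. exact: expsumS. Qed.

Section RealExpSeries.
Variable R : realType.

Lemma expsumR_cvg (x : R) : expsumR x @ \oo --> expR x.
Proof.
have -> : expsumR x = series (exp_coeff x).
  apply/funext => N; rewrite /expsumR /expsum /series /= big_mkord.
  by apply: eq_bigr => k _; rewrite /exp_coeff /= mulrC.
exact: is_cvg_series_exp_coeff.
Qed.

Lemma expsumR_le_expR (x : R) N : 0 <= x -> expsumR x N <= expR x.
Proof.
move=> x_ge0; have cvg_x : expsumR x @ \oo --> expR x := @expsumR_cvg x.
have nd : nondecreasing_seq (expsumR x).
  apply/nondecreasing_seqP => k; rewrite expsumRS lerDl.
  by rewrite mulr_ge0 ?invr_ge0 ?exprn_ge0.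
by have := nondecreasing_cvgn_le nd (cvgP _ cvg_x) N; rewrite (cvg_lim _ cvg_x).
Qed.

End RealExpSeries.

Section SquareMatrixNorm.
Variables (R : rcfType) (n : nat).
Local Notation M := 'M[R[i]]_n.+1.
Implicit Types X Y : M.

Lemma l1norm1 : l1norm (1 : M) = n.+1%:R.
Proof.
rewrite /l1norm (eq_bigr (fun _ => 1)) ?sumr_const ?card_ord // => i _.
rewrite (bigD1 i) //= big1 => [|j /negPf ne_ji]; first by rewrite mxE eqxx normc1 addr0.
by rewrite mxE eq_sym ne_ji normc0.
Qed.

Lemma l1normX X k : l1norm (X ^+ k) <= n.+1%:R * l1norm X ^+ k.
Proof.
elim: k => [|k IHk]; first by rewrite !expr0 l1norm1 mulr1.
rewrite exprSr (le_trans (l1normM _ _)) // exprSr mulrA.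
by rewrite ler_wpM2r ?l1norm_ge0.
Qed.

Lemma l1norm_expsum_term X k :
  l1norm ((k`!%:R : R[i])^-1 *: X ^+ k) <= n.+1%:R * ((k`!%:R)^-1 * l1norm X ^+ k).
Proof.
by rewrite l1normZ normc_invn mulrCA ler_wpM2l ?invr_ge0 ?l1normX.
Qed.

Lemma l1norm_expsum X N : l1norm (expsum X N) <= n.+1%:R * expsumR (l1norm X) N.
Proof.
rewrite /expsumR /expsum mulr_sumr; apply: le_trans (l1norm_sum _ _ _) _.
by apply: ler_sum => k _; exact: l1norm_expsum_term.
Qed.

Lemma l1norm_expsum_sub1 X N :
  l1norm (expsum X N.+1 - 1) <= n.+1%:R * (expsumR (l1norm X) N.+1 - 1).
Proof.
rewrite /expsumR /expsum !big_ord_recl /= !expr0 fact0 !invr1 !scale1r.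
rewrite addrC addKr [_ + _ - 1]addrC addKr mulr_sumr.
apply: le_trans (l1norm_sum _ _ _) _.
by apply: ler_sum => k _; exact: l1norm_expsum_term.
Qed.

Lemma l1norm_cauchy_term X Y i j :
  l1norm (cauchy_term X Y i j) <=
  n.+1%:R ^+ 2 * (((i`!%:R)^-1 * (j`!%:R)^-1) * (l1norm X ^+ i * l1norm Y ^+ j)).
Proof.
rewrite /cauchy_term l1normZ normcM !normc_invn mulrCA.
rewrite ler_wpM2l ?mulr_ge0 ?invr_ge0 //.
apply: le_trans (l1normM _ _) _; rewrite expr2 mulrACA.
by apply: ler_pM; rewrite ?l1norm_ge0 ?l1normX.
Qed.

End SquareMatrixNorm.

Section RealSequences.
Variable R : realType.
Implicit Types f g : nat -> R.

Lemma cvgr0_sandwich f g :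
  (forall N, 0 <= f N <= g N) -> g @ \oo --> (0 : R) -> f @ \oo --> (0 : R).
Proof.
move=> fg g0; apply: (@squeeze_cvgr _ _ _ _ (fun _ => 0) g) => //; last exact: cvg_cst.
by near=> N; exact: fg.
Unshelve. all: by end_near.
Qed.

Lemma ler0_cvg0 g c : g @ \oo --> (0 : R) -> (forall N, c <= g N) -> c <= 0.
Proof.
move=> g0 c_le; rewrite -(cvg_lim _ g0) //.
by apply: limr_ge; [exact: cvgP g0 | exact: nearW].
Qed.

Lemma cvgr0D f g :
  f @ \oo --> (0 : R) -> g @ \oo --> (0 : R) -> (fun N => f N + g N) @ \oo --> (0 : R).
Proof. by move=> f0 g0; have := cvgD f0 g0; rewrite addr0 => fg0; exact: fg0. Qed.

Lemma cvgr0M f g (l : R) :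
  f @ \oo --> (0 : R) -> g @ \oo --> l -> (fun N => f N * g N) @ \oo --> (0 : R).
Proof. by move=> f0 gl; have := cvgM f0 gl; rewrite mul0r => fg0; exact: fg0. Qed.

Lemma cvgr0_sum (I : Type) (r : seq I) (g : I -> nat -> R) :
  (forall i, g i @ \oo --> (0 : R)) -> (fun N => \sum_(i <- r) g i N) @ \oo --> (0 : R).
Proof.
move=> g0; elim: r => [|i r IHr].
  by under eq_fun do rewrite big_nil; exact: cvg_cst.
by under eq_fun do rewrite big_cons; exact: cvgr0D.
Qed.

Lemma cvgr_dist0 f (l : R) : f @ \oo --> l -> (fun N => `|f N - l|) @ \oo --> (0 : R).
Proof. by move=> fl; apply/norm_cvg0P/subr_cvg0. Qed.

Lemma cvgr_dist_le f e (l : R) :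
  e @ \oo --> (0 : R) -> (forall N, `|f N - l| <= e N) -> f @ \oo --> l.
Proof.
move=> e0 fe; apply/subr_cvg0/norm_cvg0P; apply: cvgr0_sandwich e0 => N.
by rewrite normr_ge0 fe.
Qed.

Lemma cvgn_dominated f (K b : R) : 0 <= b -> 0 <= K ->
  (forall N, `|f N.+1 - f N| <= K * ((N`!%:R)^-1 * b ^+ N)) ->
  (forall N, `|f N| <= K * expsumR b N) -> cvgn f.
Proof.
move=> b_ge0 K_ge0 f_step f_bound.
(* Adding the dominating partial sums makes [f] nondecreasing and bounded above. *)
pose g N := f N + K * expsumR b N.
have nd_g : nondecreasing_seq g.
  apply/nondecreasing_seqP => N; rewrite /g expsumRS mulrDr.
  by have := f_step N; rewrite ler_norml => /andP[? _]; lra.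
have ub_g : has_ubound (range g).
  exists (2 * K * expR b) => _ [N _ <-]; rewrite /g.
  have := f_bound N; rewrite ler_norml => /andP[_ ?].
  have : K * expsumR b N <= K * expR b by rewrite ler_wpM2l ?expsumR_le_expR.
  lra.
have -> : f = g - (fun N => K * expsumR b N) by apply/funext => N; rewrite /g /= addrK.
apply: is_cvgB; first exact: nondecreasing_is_cvgn.
by apply: is_cvgM; [exact: is_cvg_cst | exact: cvgP _ (@expsumR_cvg R b)].
Qed.

End RealSequences.

Section MatrixConvergence.
Variable R : realType.
Local Notation C := R[i].

Definition mxcvg p q (f : nat -> 'M[C]_(p, q)) (U : 'M[C]_(p, q)) :=
  (fun N => l1norm (f N - U)) @ \oo --> (0 : R).

Lemma mxcvg_unique p q (f : nat -> 'M[C]_(p, q)) U V : mxcvg f U -> mxcvg f V -> U = V.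
Proof.
rewrite /mxcvg => fU fV; apply/eqP; rewrite -subr_eq0; apply/eqP/l1norm_le0_eq0.
apply: (ler0_cvg0 (cvgr0D fU fV)) => N.
have -> : U - V = (f N - V) - (f N - U) by apply/esym; rewrite opprB addrC addrA subrK.
by apply: le_trans (l1normD _ _) _; rewrite l1normN addrC.
Qed.

Lemma mxcvg_near p q (f g : nat -> 'M[C]_(p, q)) U :
  mxcvg f U -> (fun N => l1norm (g N - f N)) @ \oo --> (0 : R) -> mxcvg g U.
Proof.
rewrite /mxcvg => fU gf; apply: cvgr0_sandwich (cvgr0D gf fU) => N; rewrite l1norm_ge0 /=.
have -> : g N - U = (g N - f N) + (f N - U) by rewrite addrA subrK.
exact: l1normD.
Qed.

Lemma mxcvgM p q r (f : nat -> 'M[C]_(p, q)) (g : nat -> 'M[C]_(q, r)) U V :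
  mxcvg f U -> mxcvg g V -> mxcvg (fun N => f N *m g N) (U *m V).
Proof.
rewrite /mxcvg => fU gV.
have bound0 : (fun N => l1norm (f N - U) * l1norm (g N - V) + l1norm (f N - U) * l1norm V
    + l1norm (g N - V) * l1norm U) @ \oo --> (0 : R).
  apply: cvgr0D; first apply: cvgr0D.
  - exact: cvgr0M fU gV.
  - exact: cvgr0M fU (cvg_cst _).
  - exact: cvgr0M gV (cvg_cst _).
apply: cvgr0_sandwich bound0 => N; rewrite l1norm_ge0 /=.
have -> : f N *m g N - U *m V = (f N - U) *m (g N - V) + (f N - U) *m V + U *m (g N - V).
  by apply/esym; rewrite -mulmxDr subrK mulmxBl mulmxBr addrA subrK.
apply: le_trans (l1normD _ _) _; apply: lerD; last by rewrite mulrC; exact: l1normM.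
by apply: le_trans (l1normD _ _) _; apply: lerD; exact: l1normM.
Qed.

End MatrixConvergence.

Section MatrixExponential.
Variables (R : realType) (n : nat).
Local Notation M := 'M[R[i]]_n.+1.

Lemma exp_partialE (B : M) : exp_partial B = expsum B.
Proof. by []. Qed.

Lemma is_expmx_mxcvg (B U : M) : is_expmx B U <-> mxcvg (exp_partial B) U.
Proof.
split=> [BU | BU j k].
  apply: (@cvgr0_sandwich _ _ (fun N => \sum_i \sum_j
     (`|complex.Re (exp_partial B N i j) - complex.Re (U i j)| +
      `|complex.Im (exp_partial B N i j) - complex.Im (U i j)|))).
    move=> N; rewrite l1norm_ge0 /=; apply: ler_sum => i _; apply: ler_sum => j _.
    by rewrite !mxE -!raddfB; exact: normc_le_ReIm.
  apply: cvgr0_sum => i; apply: cvgr0_sum => j.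
  by apply: cvgr0D; apply: cvgr_dist0; case: (BU i j).
have entry_le N : normc (exp_partial B N j k - U j k) <= l1norm (exp_partial B N - U).
  by have := normc_le_l1norm (exp_partial B N - U) j k; rewrite !mxE.
split; apply: (cvgr_dist_le BU) => N; rewrite -raddfB.
  exact: le_trans (normc_Re _) (entry_le N).
exact: le_trans (normc_Im _) (entry_le N).
Qed.

Lemma is_expmx_ex (B : M) : exists U, is_expmx B U.
Proof.
have entry_step N j k : normc (exp_partial B N.+1 j k - exp_partial B N j k) <=
    n.+1%:R * ((N`!%:R)^-1 * l1norm B ^+ N).
  rewrite exp_partialE expsumS mxE addrAC subrr add0r.
  exact: le_trans (normc_le_l1norm _ j k) (l1norm_expsum_term _ _).
have entry_bound N j k : normc (exp_partial B N j k) <= n.+1%:R * expsumR (l1norm B) N.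
  exact: le_trans (normc_le_l1norm _ j k) (l1norm_expsum _ _).
have cvg_part (part : R[i] -> R) : {morph part : x y / x - y} ->
    (forall z, `|part z| <= normc z) -> forall j k, cvgn (fun N => part (exp_partial B N j k)).
  move=> partB part_le j k; apply: (cvgn_dominated (l1norm_ge0 B) (ler0n _ _)) => N.
    by rewrite -partB; exact: le_trans (part_le _) (entry_step N j k).
  exact: le_trans (part_le _) (entry_bound N j k).
exists (\matrix_(j, k) (limn (fun N => complex.Re (exp_partial B N j k)) +i*
                       limn (fun N => complex.Im (exp_partial B N j k)))).
move=> j k; rewrite mxE /=.
by split; apply: cvg_part => [x y | z]; rewrite ?normc_Re ?normc_Im ?raddfB.
Qed.

End MatrixExponential.

Section QuantumWalk.
Variables (R : realType) (n : nat) (A : 'M[R[i]]_n.+1).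
Local Notation M := 'M[R[i]]_n.+1.

Definition generator (t : R) : M := - ('i * t%:C) *: A.

(* Chosen once as a function of [t], so that [walk s] and [walk t] never unfold
   into comparisons of their generators. *)
Definition walk : R -> M := projT1 (choice (fun t => is_expmx_ex (generator t))).

Lemma walkP t : walk_mx A t (walk t).
Proof. exact: projT2 (choice (fun t => is_expmx_ex (generator t))) t. Qed.

Lemma walk_cvg t : mxcvg (exp_partial (generator t)) (walk t).
Proof. exact/is_expmx_mxcvg/walkP. Qed.

Lemma walk_mxE t U : walk_mx A t U -> U = walk t.
Proof. by move/is_expmx_mxcvg/mxcvg_unique; apply; exact: walk_cvg. Qed.

Lemma generatorD s t : generator (s + t) = generator s + generator t.
Proof. by rewrite /generator -scalerDl -opprD rmorphD mulrDr. Qed.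

Lemma generator_comm s t : GRing.comm (generator s) (generator t).
Proof. by rewrite /GRing.comm /generator -!scalerAl -!scalerAr !scalerA mulrC. Qed.

Lemma l1norm_generator t : l1norm (generator t) = `|t| * l1norm A.
Proof. by rewrite l1normZ normcN normcM normc_i mul1r normc_real. Qed.

Lemma walk0 : walk 0 = 1.
Proof.
have := walk_cvg 0; rewrite /generator mulr0 oppr0 scale0r => /mxcvg_unique; apply.
rewrite /mxcvg -cvg_shiftS /=.
under eq_fun do rewrite exp_partialE expsum0 subrr l1norm0.
exact: cvg_cst.
Qed.

(* The Cauchy product of two partial sums differs from the partial sum of the sum by
   the terms of total degree at least [N]; these are dominated by the same expression
   for the real exponential series, which tends to [exp a * exp b - exp (a + b) = 0]. *)
Lemma walkD s t : walk (s + t) = walk s * walk t.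
Proof.
apply/esym; apply: (mxcvg_unique (mxcvgM (walk_cvg s) (walk_cvg t))).
apply: mxcvg_near (walk_cvg (s + t)) _; rewrite generatorD.
set a := l1norm (generator s); set b := l1norm (generator t).
apply: (@cvgr0_sandwich _ _ (fun N => n.+1%:R ^+ 2 *
  (expsumR a N * expsumR b N - expsumR (a + b) N))) => [N|].
  have -> : exp_partial (generator s) N *m exp_partial (generator t) N
      - exp_partial (generator s + generator t) N = \sum_(i < N) \sum_(j < N)
      (if (i + j < N)%N then 0 else cauchy_term (generator s) (generator t) i j).
    exact: expsumM_sub (generator_comm s t).
  have -> : expsumR a N * expsumR b N - expsumR (a + b) N = \sum_(i < N) \sum_(j < N)
      (if (i + j < N)%N then 0 else cauchy_term (a : R^o) b i j).
    by apply: expsumM_sub; exact: mulrC.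
  rewrite l1norm_ge0 mulr_sumr; apply: le_trans (l1norm_sum _ _ _) _.
  apply: ler_sum => i _.
  apply: le_trans (l1norm_sum _ _ _) _; rewrite mulr_sumr; apply: ler_sum => j _.
  by case: ifP => _; rewrite ?l1norm0 ?mulr0 //; exact: l1norm_cauchy_term.
have lim0 : (fun N => expsumR a N * expsumR b N - expsumR (a + b) N) @ \oo -->
    expR a * expR b - expR (a + b).
  by apply: cvgB; [apply: cvgM|]; exact: expsumR_cvg.
rewrite expRD subrr in lim0.
by have := cvgM (cvg_cst (n.+1%:R ^+ 2 : R)) lim0; rewrite mulr0 => lim; exact: lim.
Qed.

Lemma l1norm_walk_sub1 h : l1norm (walk h - 1) <= n.+1%:R * (expR (`|h| * l1norm A) - 1).
Proof.
have := walk_cvg h; rewrite /mxcvg -cvg_shiftS => /= shifted.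
rewrite -subr_le0; apply: (ler0_cvg0 shifted) => N /=; rewrite lerBlDr.
have -> : walk h - 1 = (walk h - exp_partial (generator h) N.+1)
    + (exp_partial (generator h) N.+1 - 1) by rewrite addrA subrK.
apply: le_trans (l1normD _ _) _; rewrite l1normB lerD2l.
apply: le_trans (l1norm_expsum_sub1 _ _) _.
by rewrite ler_wpM2l // lerD2r -l1norm_generator expsumR_le_expR ?l1norm_ge0.
Qed.

Lemma walk_near1 eps : 0 < eps ->
  exists2 d : R, 0 < d & forall h, 0 <= h <= d -> l1norm (walk h - 1) <= eps.
Proof.
move=> eps_gt0; have n_gt0 : (0 : R) < n.+1%:R by rewrite ltr0n.
have A_ge0 := l1norm_ge0 A.
pose L := ln (1 + n.+1%:R^-1 * eps).
have L_gt0 : 0 < L by rewrite ln_gt0 // ltrDl mulr_gt0 // invr_gt0.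
exists (L / (l1norm A + 1)) => [|h /andP[h_ge0 le_hd]]; first by rewrite divr_gt0 // ltr_wpDl.
apply: le_trans (l1norm_walk_sub1 h) _; rewrite ger0_norm //.
have hA_le : h * l1norm A <= L.
  apply: le_trans (ler_wpM2r A_ge0 le_hd) _.
  by rewrite mulrAC ler_pdivrMr ?ltr_wpDl // ler_wpM2l ?lerDl // ltW.
rewrite -ler_pdivlMl // lerBlDl -[X in _ <= X]lnK ?ler_expR; first exact: hA_le.
by rewrite posrE addr_gt0 // mulr_gt0 // invr_gt0.
Qed.

End QuantumWalk.

Section Adjoint.
Variables (R : realType) (n : nat).
Local Notation M := 'M[R[i]]_n.+1.

Definition adjmx (P : M) : M := (map_mx (@conjc R) P)^T.

Lemma adjmxB P Q : adjmx (P - Q) = adjmx P - adjmx Q.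
Proof. by rewrite /adjmx map_mxB raddfB. Qed.

Lemma adjmxM P Q : adjmx (P * Q) = adjmx Q * adjmx P.
Proof. by rewrite /adjmx -!mulmxE map_mxM trmx_mul. Qed.

Lemma adjmxZ c P : adjmx (c *: P) = c^* *: adjmx P.
Proof. by rewrite /adjmx map_mxZ linearZ. Qed.

Lemma adjmxX P k : adjmx (P ^+ k) = adjmx P ^+ k.
Proof.
elim: k => [|k IHk]; last by rewrite exprSr adjmxM IHk exprS.
by apply/matrixP => i j; rewrite !expr0 !mxE eq_sym conjc_nat.
Qed.

Lemma adjmx_sum (I : Type) (r : seq I) (F : I -> M) :
  adjmx (\sum_(i <- r) F i) = \sum_(i <- r) adjmx (F i).
Proof. by rewrite /adjmx map_mx_sum raddf_sum. Qed.

Lemma adjmx_exp_partial B N : adjmx (exp_partial B N) = exp_partial (adjmx B) N.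
Proof.
rewrite /exp_partial adjmx_sum; apply: eq_bigr => k _.
by rewrite adjmxZ adjmxX fmorphV rmorph_nat.
Qed.

End Adjoint.

Section Unitarity.
Variables (R : realType) (n : nat) (A : 'M[R[i]]_n.+1).
Hypothesis hA : hermitian_mx A.
Local Notation M := 'M[R[i]]_n.+1.

Lemma adjmx_generator t : adjmx (generator A t) = generator A (- t).
Proof.
rewrite /generator adjmxZ /adjmx -hA rmorphN rmorphM rmorphN.
by congr (_ *: _); simpc.
Qed.

Lemma adjmx_walk t : adjmx (walk A t) = walk A (- t).
Proof.
apply: (mxcvg_unique _ (walk_cvg A (- t))).
rewrite /mxcvg; under eq_fun do rewrite -adjmx_generator -adjmx_exp_partial -adjmxB l1norm_adj.
exact: walk_cvg.
Qed.

Lemma walk_unitary t : adjmx (walk A t) * walk A t = 1.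
Proof. by rewrite adjmx_walk -walkD addNr walk0. Qed.

Lemma walk_col_norm t u : \sum_j normc (walk A t j u) ^+ 2 = 1.
Proof.
have := congr1 (fun P : M => P u u) (walk_unitary t); rewrite !mxE eqxx /=.
under eq_bigr do rewrite !mxE mulJc.
by rewrite -rmorph_sum => /(congr1 (@complex.Re R)).
Qed.

Lemma walk_col_eq0 t w u : normc (walk A t w u) = 1 -> forall j, j != w -> walk A t j u = 0.
Proof.
move=> wu1 j ne_jw; apply: eq0_normc; apply/eqP; rewrite -sqrf_eq0; apply/eqP.
have := walk_col_norm t u; rewrite (bigD1 w) //= wu1 expr1n => /(canRL (addKr _)).
by rewrite addNr => /psumr_eq0P; apply => // ? _; exact: sqr_ge0.
Qed.

End Unitarity.

Section PerfectStateTransfer.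
Variables (R : realType) (n : nat) (A : 'M[R[i]]_n.+1).
Local Notation walk := (walk A).

Lemma pst_timesE (u w : 'I_n.+1) (t : R) :
  pst_times A u w t <-> 0 < t /\ normc (walk t w u) = 1.
Proof.
split=> [[t_gt0 [V [/walk_mxE -> wu1]]] | [t_gt0 wu1]].
  by split=> //; move: wu1; rewrite normr_normc => /(congr1 (@complex.Re R)).
by split=> //; exists (walk t); split; [exact: walkP | rewrite normr_normc wu1].
Qed.

Lemma walk_right_near (s eps : R) : 0 < eps -> exists2 d : R, 0 < d &
  forall t j k, s <= t <= s + d -> normc (walk t j k - walk s j k) <= eps.
Proof.
move=> eps_gt0; have K_gt0 : 0 < l1norm (walk s) + 1 by rewrite ltr_wpDl ?l1norm_ge0.
have [d d_gt0 near1] := walk_near1 A (divr_gt0 eps_gt0 K_gt0).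
exists d => // t j k /andP[le_st le_td].
have -> : walk t j k - walk s j k = ((walk (t - s) - 1) * walk s) j k.
  by rewrite mulrBl mul1r -walkD subrK !mxE.
apply: le_trans (normc_le_l1norm _ j k) _; apply: le_trans (l1normM _ _) _.
have := near1 (t - s); rewrite subr_ge0 lerBlDl le_st le_td => /(_ isT) near1_ts.
apply: le_trans (ler_wpM2r (l1norm_ge0 _) near1_ts) _.
by rewrite mulrAC ler_pdivrMr // ler_wpM2l ?lerDl // ltW.
Qed.

Lemma pst_times_offdiag_lb (u v : 'I_n.+1) : v != u ->
  exists2 d : R, 0 < d & forall t, pst_times A u v t -> d < t.
Proof.
move=> ne_vu; have half_gt0 : (0 : R) < 2^-1 by rewrite invr_gt0 ltr0n.
have [d d_gt0 near1] := walk_near1 A half_gt0.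
exists d => // t /pst_timesE[t_gt0 vu1]; rewrite ltNge; apply/negP => le_td.
have : normc (walk t v u) <= 2^-1.
  apply: le_trans (near1 t _); last by rewrite ltW.
  by apply: le_trans (normc_le_l1norm _ v u); rewrite !mxE (negPf ne_vu) subr0.
by rewrite vu1; lra.
Qed.

Lemma pst_times_min (u w : 'I_n.+1) (d : R) : pst_times A u w !=set0 -> 0 < d ->
  (forall t, pst_times A u w t -> d <= t) -> exists t, is_min_of (pst_times A u w) t.
Proof.
move=> T_neq0 d_gt0 d_lb; set T := pst_times A u w; set s := inf T.
have T_lb : has_lbound T by exists d => t /d_lb.
have le_ds : d <= s by apply: lb_le_inf => // t /d_lb.
exists s; split=> [|t]; last exact: ge_inf.
apply/pst_timesE; split; first exact: lt_le_trans le_ds.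
apply/eqP; rewrite -subr_eq0 -normr_le0; apply/ler_addgt0Pr => eps eps_gt0.
have [e e_gt0 near_s] := walk_right_near s eps_gt0.
have [t Tt lt_te] := inf_adherent e_gt0 (conj T_neq0 T_lb).
have /pst_timesE[_ wu1] := Tt.
rewrite add0r; apply: le_trans (near_s t w u _); last by rewrite ge_inf // ltW.
by rewrite -wu1 distrC ler_dist_normc.
Qed.

Lemma pst_times_return_gt (u v : 'I_n.+1) (t_uv : R) : hermitian_mx A -> v != u ->
  is_min_of (pst_times A u v) t_uv -> forall t, pst_times A u u t -> t_uv < t.
Proof.
move=> hA ne_vu [/pst_timesE[t_uv_gt0 vu1] min_uv] t /pst_timesE[t_gt0 uu1].
rewrite ltNge; apply/negP => le_t_uv.
have col_u := walk_col_eq0 hA uu1.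
have vu_split : walk t_uv v u = walk (t_uv - t) v u * walk t u u.
  have -> : walk t_uv = walk (t_uv - t) * walk t by rewrite -walkD subrK.
  exact: mulmx_sparse_col col_u.
have [eq_t|lt_t] := eqVneq t t_uv.
  by move: vu1; rewrite -eq_t col_u // normc0 => /esym/eqP; rewrite oner_eq0.
have : pst_times A u v (t_uv - t).
  apply/pst_timesE; split; first by rewrite subr_gt0 lt_neqAle lt_t.
  by move: vu1; rewrite vu_split normcM uu1 mulr1.
by move/min_uv; rewrite lerBrDr gerDl leNgt t_gt0.
Qed.

End PerfectStateTransfer.

Theorem lemma1 (R : realType) (n : nat) (A : 'M[complex R]_n)
  (hA : hermitian_mx A) (hU : universal_pst A) (u : 'I_n) :
  forall v : 'I_n, v != u ->
    exists t_uv t_uu : R,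
      is_min_of (pst_times A u v) t_uv /\ is_min_of (pst_times A u u) t_uu
      /\ t_uv < t_uu.
Proof.
case: n A hA hU u => [|n] A hA hU u; first by case: u.
move=> v ne_vu.
have [d d_gt0 lt_d] := pst_times_offdiag_lb A ne_vu.
have [t_uv min_uv] := pst_times_min (hU u v) d_gt0 (fun t Tt => ltW (lt_d t Tt)).
have lt_return := pst_times_return_gt hA ne_vu min_uv.
have t_uv_gt0 : 0 < t_uv by case: min_uv => /pst_timesE[].
have [t_uu min_uu] := pst_times_min (hU u u) t_uv_gt0 (fun t Tt => ltW (lt_return t Tt)).
exists t_uv, t_uu; do 2!split=> //.
by apply: lt_return; case: min_uu.
Qed.
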